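(* Let $A$ be a selfadjoint operator on a separable infinite-dimensional Hilbert space $\mathcal{H}$, and let $\mathcal{L}$ be either an $A$-regular Galerkin sequence or, if $A\ge0$, an $A^{1/2}$-regular Galerkin sequence. Let $\lambda\in\mathbb{R}$, $n_k\to\infty$, and $x_k\in\mathcal{L}_{n_k}$ with $\|x_k\|=1$, $x_k\rightharpoonup x$ weakly in $\mathcal{H}$ and $\pi_{n_k}(A-\lambda)x_k\to0$. Then $x\in\operatorname{Ker}(A-\lambda)$.
   Context: A sequence $\mathcal{L}=(\mathcal{L}_n)$ of finite-dimensional subspaces $\mathcal{L}_n\subset\operatorname{D}(A)$ is $A$-regular if for every $f\in\operatorname{D}(A)$ there exist $f_n\in\mathcal{L}_n$ with $\|f_n-f\|+\|Af_n-Af\|\to0$; then $A_n=\pi_nA|_{\mathcal{L}_n}$, $\pi_n$ the orthogonal projection onto $\mathcal{L}_n$. If $A\ge0$, finite-dimensional $\mathcal{L}_n\subset\operatorname{D}(A^{1/2})$ form an $A^{1/2}$-regular sequence if every $f\in\operatorname{D}(A^{1/2})$ is the limit of some $f_n\in\mathcal{L}_n$ in the norm $\|\cdot\|+\|A^{1/2}\cdot\|$; then $A_n:\mathcal{L}_n\to\mathcal{L}_n$ is defined by $\langle y,A_nx\rangle=\langle A^{1/2}y,A^{1/2}x\rangle$. In both cases $\pi_n(A-\lambda)x:=A_nx-\lambda x$ for $x\in\mathcal{L}_n$. *)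

From HB Require Import structures.
From mathcomp Require Import all_boot all_order all_algebra.
From mathcomp Require Import reals.
From mathcomp Require Import complex.
Set Implicit Arguments. Unset Strict Implicit. Unset Printing Implicit Defensive.
Import Order.TTheory GRing.Theory Num.Theory.
Local Open Scope ring_scope.

Section HilbertDefs.
Variable R : realType.
Local Notation C := R[i].
Variable V : lmodType C.
(* inner product: conjugate-linear in the first, linear in the second argument *)
Variable inner : V -> V -> C.

Definition hnorm (x : V) : R := Num.sqrt (complex.Re (inner x x)).

Definition cmod (z : C) : R := Num.sqrt (complex.Re z ^+ 2 + complex.Im z ^+ 2).

Definition is_inner_product : Prop :=
  [/\ (forall x y z : V, forall a : C, inner x (a *: y + z) = a * inner x y + inner x z),
      (forall x y : V, inner y x = conjc (inner x y)),
      (forall x : V, 0 <= complex.Re (inner x x)) &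
      (forall x : V, inner x x = 0 -> x = 0)].

Definition hconverges (u : nat -> V) (v : V) : Prop :=
  forall e : R, 0 < e -> exists N, forall k, (N <= k)%N -> hnorm (u k - v) < e.

Definition rconverges (u : nat -> R) (l : R) : Prop :=
  forall e : R, 0 < e -> exists N, forall k, (N <= k)%N -> `|u k - l| < e.

Definition cconverges (u : nat -> C) (l : C) : Prop :=
  forall e : R, 0 < e -> exists N, forall k, (N <= k)%N -> cmod (u k - l) < e.

Definition hcauchy (u : nat -> V) : Prop :=
  forall e : R, 0 < e -> exists N, forall k l, (N <= k)%N -> (N <= l)%N ->
    hnorm (u k - u l) < e.

Definition weakly_converges (u : nat -> V) (v : V) : Prop :=
  forall y : V, cconverges (fun k => inner y (u k)) (inner y v).

Definition span (s : seq V) (x : V) : Prop :=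
  exists c : 'I_(size s) -> C, x = \sum_(i < size s) c i *: nth 0 s i.

Definition is_fd_subspace (S : V -> Prop) : Prop :=
  exists s : seq V, forall x, S x <-> span s x.

Definition infinite_dimensional : Prop :=
  forall s : seq V, exists x, ~ span s x.

Definition separable : Prop :=
  exists d : nat -> V, forall x e, 0 < e -> exists i, hnorm (x - d i) < e.

Definition complete : Prop :=
  forall u, hcauchy u -> exists v, hconverges u v.

Definition is_sep_inf_hilbert : Prop :=
  [/\ is_inner_product, complete, separable & infinite_dimensional].

(* (possibly unbounded) operators: a domain D and an action A (irrelevant off D) *)
Definition is_subspace (D : V -> Prop) : Prop :=
  D 0 /\ forall a x y, D x -> D y -> D (a *: x + y).

Definition dense (D : V -> Prop) : Prop :=
  forall x e, 0 < e -> exists y, D y /\ hnorm (x - y) < e.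

(* selfadjoint: densely defined, symmetric, and D(A^* ) is contained in D(A) *)
Definition selfadjoint (D : V -> Prop) (A : V -> V) : Prop :=
  [/\ is_subspace D, dense D,
      (forall x y, D x -> D y -> inner (A x) y = inner x (A y))
    & (forall y z, (forall x, D x -> inner (A x) y = inner x z) -> D y)].

Definition nonneg_op (D : V -> Prop) (A : V -> V) : Prop :=
  forall x, D x -> 0 <= complex.Re (inner x (A x)).

(* (DB, B) is the nonnegative selfadjoint square root of (D, A):
   B >= 0 selfadjoint and B^2 = A, with D(B^2) = {x in D(B) | B x in D(B)}.
   (Such B exists and is unique when A >= 0 is selfadjoint.) *)
Definition is_sqrt_op (D : V -> Prop) (A : V -> V) (DB : V -> Prop) (B : V -> V) : Prop :=
  [/\ selfadjoint DB B, nonneg_op DB B,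
      (forall x, D x <-> (DB x /\ DB (B x)))
    & (forall x, D x -> A x = B (B x))].

Definition regular_seq (DT : V -> Prop) (T : V -> V) (L : nat -> V -> Prop) : Prop :=
  [/\ (forall n, is_fd_subspace (L n)),
      (forall n x, L n x -> DT x)
    & (forall f, DT f -> exists fn : nat -> V, (forall n, L n (fn n)) /\
          rconverges (fun n => hnorm (fn n - f) + hnorm (T (fn n) - T f)) 0)].

Definition is_orth_proj (S : V -> Prop) (x p : V) : Prop :=
  S p /\ forall y, S y -> inner y (x - p) = 0.

(* z = A_n x for the Galerkin sequence in the A-regular case: A_n = pi_n A|_{L_n} *)
Definition galerkin_A (Ln : V -> Prop) (A : V -> V) (x z : V) : Prop :=
  is_orth_proj Ln (A x) z.

(* z = A_n x in the A^{1/2}-regular case: <y, A_n x> = <B y, B x> for y in L_n *)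
Definition galerkin_form (Ln : V -> Prop) (B : V -> V) (x z : V) : Prop :=
  Ln z /\ forall y, Ln y -> inner y z = inner (B y) (B x).

End HilbertDefs.

(* Fix f in D(A) and pick g_k in L_{n_k} with g_k -> f and T g_k -> T f, where
   T = A (resp. T = A^{1/2}).  Testing the Galerkin equation for x_k against g_k
   gives
     <Af, x_k> = <g_k, r_k> + lam <g_k, x_k> - <T g_k - T f, q_k>
   with q_k = x_k (resp. q_k = A^{1/2} x_k, bounded because
   |q_k|^2 = <x_k, r_k + lam x_k>).  Letting k -> oo, weak convergence yields
   <Af, x> = <f, lam x> for every f in D(A), so x lies in D(A^* ) = D(A) and
   Ax = lam x. *)

From HB Require Import structures.
From mathcomp Require Import all_boot all_order all_algebra.
From mathcomp Require Import reals complex.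
From mathcomp Require Import ring lra.
Set Implicit Arguments. Unset Strict Implicit. Unset Printing Implicit Defensive.
Import Order.TTheory GRing.Theory Num.Theory.
Local Open Scope ring_scope.

Section Modulus.
Variable R : realType.
Implicit Types (a : R) (z w : R[i]).

Lemma cmodE z : (cmod z)%:C%C = `|z|.
Proof. by rewrite normc_def. Qed.

Lemma cmod_ge0 z : 0 <= cmod z.
Proof. exact: sqrtr_ge0. Qed.

Lemma cmodD z w : cmod (z + w) <= cmod z + cmod w.
Proof. by rewrite -lecR rmorphD /= !cmodE ler_normD. Qed.

Lemma cmodM z w : cmod (z * w) = cmod z * cmod w.
Proof. by apply: complexI; rewrite rmorphM /= !cmodE normrM. Qed.

Lemma cmodJ z : cmod (z^*)%C = cmod z.
Proof. by apply: complexI; rewrite !cmodE normcJ. Qed.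

Lemma cmod_eq0 z : cmod z = 0 -> z = 0.
Proof. by move=> z0; apply/eqP; rewrite -normr_eq0 -cmodE z0. Qed.

Lemma Re_le_cmod z : complex.Re z <= cmod z.
Proof.
rewrite -lecR cmodE; apply: le_trans (normc_ge_Re z).
by rewrite lecR ler_norm.
Qed.

End Modulus.

Section Sequences.
Variable R : realType.
Implicit Types (s t : nat -> R) (u v : nat -> R[i]).

Definition vanishing s := forall e, 0 < e -> exists N, forall k, (N <= k)%N -> s k < e.

Definition eventually_bounded s := exists M N, forall k, (N <= k)%N -> s k <= M.

Definition cnull u := vanishing (fun k => cmod (u k)).

Lemma vanishing_bounded s : vanishing s -> eventually_bounded s.
Proof. by move=> /(_ 1 ltr01) [N sN]; exists 1, N => k /sN /ltW. Qed.

Lemma eventually_bounded_sqr s :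
  (forall k, 0 <= s k) -> eventually_bounded (fun k => s k ^+ 2) -> eventually_bounded s.
Proof.
move=> s_ge0 [M [N sN]]; exists (1 + M), N => k /sN le_sM.
have := s_ge0 k; nra.
Qed.

Lemma vanishing_mul_bounded s t w :
  (forall k, 0 <= t k) -> eventually_bounded s -> vanishing t ->
  (forall k, w k <= s k * t k) -> vanishing w.
Proof.
move=> t_ge0 [M [N0 sM]] t0 le_w e e_gt0.
have eM_gt0 : 0 < e / (`|M| + 1) by rewrite divr_gt0 // ltr_wpDl.
have [N tN] := t0 _ eM_gt0; exists (maxn N N0) => k; rewrite geq_max => /andP[/tN tk /sM sk].
have eM : e / (`|M| + 1) * (`|M| + 1) = e by rewrite divfK // gt_eqF // ltr_wpDl.
apply: le_lt_trans (le_w k) _; rewrite -eM.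
have := ler_norm M; have := normr_ge0 M; have := t_ge0 k; nra.
Qed.

Lemma cnullD u v : cnull u -> cnull v -> cnull (fun k => u k + v k).
Proof.
move=> u0 v0 e e_gt0; have e2_gt0 : 0 < e / 2 by rewrite divr_gt0.
have [N1 uN] := u0 _ e2_gt0; have [N2 vN] := v0 _ e2_gt0.
exists (maxn N1 N2) => k; rewrite geq_max => /andP[/uN uk /vN vk].
by apply: le_lt_trans (cmodD _ _) _; rewrite [e]splitr ltrD.
Qed.

Lemma cnullZ a u : cnull u -> cnull (fun k => a * u k).
Proof.
move=> u0; apply: (@vanishing_mul_bounded (fun=> cmod a) (fun k => cmod (u k))
  (fun k => cmod (a * u k))) => //.
- by move=> k; apply: cmod_ge0.
- by exists (cmod a), 0%N.
- by move=> k; rewrite cmodM.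
Qed.

Lemma eq_cnull u v : u =1 v -> cnull u -> cnull v.
Proof. by move=> uv u0 e /u0 [N uN]; exists N => k; rewrite -uv; apply: uN. Qed.

Lemma cnullB u v : cnull u -> cnull v -> cnull (fun k => u k - v k).
Proof.
by move=> u0 v0; apply: eq_cnull (cnullD u0 (cnullZ (-1) v0)) => k; rewrite mulN1r.
Qed.

Lemma cnull_const z : cnull (fun=> z) -> z = 0.
Proof.
move=> z0; apply: cmod_eq0; apply/eqP; rewrite eq_le cmod_ge0 andbT.
apply/ler_addgt0Pr => e /z0 [N zN]; rewrite add0r; exact: ltW (zN N (leqnn _)).
Qed.

Definition tends_to_infty (n : nat -> nat) :=
  forall M, exists K, forall k, (K <= k)%N -> (M <= n k)%N.

Lemma vanishing_subseq s t n :
  (forall m, 0 <= s m) -> (forall m, 0 <= t m) -> rconverges (fun m => s m + t m) 0 ->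
  tends_to_infty n -> vanishing (fun k => s (n k)) /\ vanishing (fun k => t (n k)).
Proof.
move=> s_ge0 t_ge0 st0 n_oo; split=> e /st0 [N stN]; have [K nK] := n_oo N;
  exists K => k /nK /stN; rewrite subr0 ger0_norm ?addr_ge0 //;
  have := s_ge0 (n k); have := t_ge0 (n k); lra.
Qed.

End Sequences.

Section InnerProduct.
Variables (R : realType) (V : lmodType R[i]) (inner : V -> V -> R[i]).
Hypothesis Hip : is_inner_product inner.
Local Notation hn := (hnorm inner).

Lemma innerDZr x y z a : inner x (a *: y + z) = a * inner x y + inner x z.
Proof. by case: Hip => H _ _ _; apply: H. Qed.

Lemma innerC x y : inner y x = (inner x y)^*%C.
Proof. by case: Hip => _ H _ _; apply: H. Qed.

Lemma inner_self_Re_ge0 x : 0 <= complex.Re (inner x x).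
Proof. by case: Hip => _ _ H _; apply: H. Qed.

Lemma inner_self_eq0 x : inner x x = 0 -> x = 0.
Proof. by case: Hip => _ _ _ H; apply: H. Qed.

Lemma inner0r x : inner x 0 = 0.
Proof.
have := innerDZr x 0 0 1; rewrite scale1r addr0 mul1r => /eqP.
by rewrite -subr_eq subrr eq_sym => /eqP.
Qed.

Lemma innerZr x y a : inner x (a *: y) = a * inner x y.
Proof. by have := innerDZr x y 0 a; rewrite !addr0 inner0r addr0. Qed.

Lemma innerDr x y z : inner x (y + z) = inner x y + inner x z.
Proof. by have := innerDZr x y z 1; rewrite scale1r mul1r. Qed.

Lemma innerBr x y z : inner x (y - z) = inner x y - inner x z.
Proof. by rewrite innerDr -scaleN1r innerZr mulN1r. Qed.

Lemma inner0l y : inner 0 y = 0.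
Proof. by rewrite innerC inner0r conjc0. Qed.

Lemma innerZl x y a : inner (a *: x) y = a^*%C * inner x y.
Proof. by rewrite innerC innerZr rmorphM /= -innerC. Qed.

Lemma innerBl x y z : inner (x - y) z = inner x z - inner y z.
Proof. by rewrite innerC innerBr rmorphB /= -!innerC. Qed.

Lemma inner_self x : inner x x = (hn x ^+ 2)%:C%C.
Proof.
rewrite /hnorm sqr_sqrtr ?inner_self_Re_ge0 //.
have := innerC x x; case: (inner x x) => a b /= [] /eqP.
by rewrite -subr_eq0 opprK -mulr2n mulrn_eq0 /= => /eqP ->.
Qed.

Lemma hnorm_ge0 x : 0 <= hn x.
Proof. exact: sqrtr_ge0. Qed.

Lemma hnorm_eq0 x : hn x = 0 -> x = 0.
Proof. by move=> x0; apply: inner_self_eq0; rewrite inner_self x0 expr0n. Qed.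

Lemma Cauchy_Schwarz x y : cmod (inner x y) <= hn x * hn y.
Proof.
have [x0|xn0] := eqVneq (hn x) 0.
  by rewrite (hnorm_eq0 x0) inner0l -lecR cmodE normr0 ler0c mulr_ge0 ?hnorm_ge0.
set a := hn x ^+ 2; set b := inner x y.
have a_gt0 : 0 < a by rewrite exprn_gt0 // lt_def xn0 hnorm_ge0.
have expand : inner (a%:C%C *: y - b *: x) (a%:C%C *: y - b *: x)
    = (a * (a * hn y ^+ 2 - cmod b ^+ 2))%:C%C.
  rewrite !(innerBl, innerBr, innerZl, innerZr) !inner_self -/a (innerC x y) -/b.
  have normb : b * b^*%C = (cmod b)%:C%C * (cmod b)%:C%C by rewrite cmodE -expr2 sqr_normc.
  rewrite conjc_real !(rmorphM, rmorphB, rmorphXn) /= -normb; ring.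
have := inner_self_Re_ge0 (a%:C%C *: y - b *: x).
rewrite expand /= pmulr_rge0 // subr_ge0 -exprMn => le_b.
by rewrite -(ler_pXn2r (_ : 0 < 2)%N) ?nnegrE ?mulr_ge0 ?hnorm_ge0 ?sqrtr_ge0 //.
Qed.

Lemma cnull_inner (u v : nat -> V) :
  eventually_bounded (fun k => hn (u k)) -> vanishing (fun k => hn (v k)) ->
  cnull (fun k => inner (u k) (v k)) /\ cnull (fun k => inner (v k) (u k)).
Proof.
move=> u_bnd v0; have hv_ge0 k : 0 <= hn (v k) by exact: hnorm_ge0.
split; apply: (vanishing_mul_bounded hv_ge0 u_bnd v0) => k.
  exact: Cauchy_Schwarz.
by rewrite innerC cmodJ Cauchy_Schwarz.
Qed.

Lemma vanishing_hconverges0 (r : nat -> V) :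
  hconverges inner r 0 -> vanishing (fun k => hn (r k)).
Proof. by move=> r0 e /r0 [N rN]; exists N => k /rN; rewrite subr0. Qed.

Lemma orthogonal_dense_eq0 (D : V -> Prop) w :
  dense inner D -> (forall f, D f -> inner f w = 0) -> w = 0.
Proof.
move=> D_dense w_orth; apply: hnorm_eq0; apply/eqP.
rewrite eq_le hnorm_ge0 andbT leNgt; apply/negP => w_gt0.
have [y [Dy wy]] := D_dense w (hn w) w_gt0.
have : hn w ^+ 2 <= hn (w - y) * hn w.
  have <- : complex.Re (inner (w - y) w) = hn w ^+ 2.
    by rewrite innerBl (w_orth y Dy) subr0 inner_self.
  exact: le_trans (Re_le_cmod _) (Cauchy_Schwarz _ _).
by rewrite expr2 ler_pM2r // leNgt wy.
Qed.

Lemma selfadjoint_adjoint_eq (D : V -> Prop) (A : V -> V) x z :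
  selfadjoint inner D A -> (forall f, D f -> inner (A f) x = inner f z) ->
  D x /\ A x = z.
Proof.
case=> _ D_dense symA adjA Ax_z; have Dx := adjA _ _ Ax_z; split=> //.
apply/eqP; rewrite -subr_eq0; apply/eqP; apply: orthogonal_dense_eq0 D_dense _ => f Df.
by rewrite innerBr -symA // Ax_z // subrr.
Qed.

Lemma regular_approx (DT : V -> Prop) (T : V -> V) L n f :
  regular_seq inner DT T L -> tends_to_infty n -> DT f ->
  exists g : nat -> V, [/\ forall k, L (n k) (g k),
    vanishing (fun k => hn (g k - f)) & vanishing (fun k => hn (T (g k) - T f))].
Proof.
case=> _ _ approx n_oo /approx [g [Lg g_f]].
have [gn_f Tgn_Tf] := vanishing_subseq (fun m => hnorm_ge0 _) (fun m => hnorm_ge0 _) g_f n_oo.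
by exists (fun k => g (n k)).
Qed.

Lemma weak_limit_identity x x0 (r g p q : nat -> V) f h lam :
  weakly_converges inner x x0 -> eventually_bounded (fun k => hn (x k)) ->
  vanishing (fun k => hn (r k)) -> vanishing (fun k => hn (g k - f)) ->
  vanishing (fun k => hn (p k)) -> eventually_bounded (fun k => hn (q k)) ->
  (forall k, inner h (x k) = inner (g k) (r k) + lam * inner (g k) (x k) - inner (p k) (q k)) ->
  inner h x0 = lam * inner f x0.
Proof.
move=> x_x0 x_bnd r0 g_f p0 q_bnd eq_h.
have f_bnd : eventually_bounded (fun=> hn f) by exists (hn f), 0%N.
have [fr0 _] := cnull_inner f_bnd r0.
have [_ gr0] := cnull_inner (vanishing_bounded r0) g_f.
have [_ gx0] := cnull_inner x_bnd g_f.
have [_ pq0] := cnull_inner q_bnd p0.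
apply/eqP; rewrite -subr_eq0; apply/eqP; apply: cnull_const.
apply: eq_cnull (cnullB (cnullD (cnullD fr0 gr0) (cnullZ lam (cnullD gx0 (x_x0 f))))
                         (cnullD (x_x0 h) pq0)) => k.
rewrite !innerBl eq_h; ring.
Qed.

Lemma galerkin_A_weak_eigen D A L n x x0 r lam f :
  selfadjoint inner D A -> regular_seq inner D A L -> tends_to_infty n ->
  (forall k, L (n k) (x k)) -> eventually_bounded (fun k => hn (x k)) ->
  weakly_converges inner x x0 -> vanishing (fun k => hn (r k)) ->
  (forall k, galerkin_A inner (L (n k)) A (x k) (r k + lam *: x k)) ->
  D f -> inner (A f) x0 = lam * inner f x0.
Proof.
move=> [_ _ symA _] Areg n_oo Lx x_bnd x_x0 r0 gal Df.
have [g [Lg g_f Ag_Af]] := regular_approx Areg n_oo Df.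
have [_ LD _] := Areg.
apply: (weak_limit_identity x_x0 x_bnd r0 g_f Ag_Af x_bnd) => k.
have [_ /(_ _ (Lg k))] := gal k.
rewrite innerBr innerDr innerZr => /eqP; rewrite subr_eq0 => /eqP gal_k.
rewrite innerBl (symA (g k) (x k)) ?gal_k; [ring | exact: LD _ _ (Lg k) | exact: LD _ _ (Lx k)].
Qed.

Lemma galerkin_form_norm Ln B x r (lam : R) :
  Ln x -> galerkin_form inner Ln B x (r + lam%:C%C *: x) ->
  hn (B x) ^+ 2 <= hn x * hn r + `|lam| * hn x ^+ 2.
Proof.
move=> Lx [_ /(_ _ Lx)]; rewrite innerDr innerZr !inner_self -rmorphM /=.
have := Cauchy_Schwarz x r; have := Re_le_cmod (inner x r).
case: (inner x r) => a b /= le_a_cmod le_cmod [<- _].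
have := ler_norm lam; have := hnorm_ge0 x; nra.
Qed.

Lemma galerkin_form_bounded (L : nat -> V -> Prop) n B x r (lam : R) :
  (forall k, L (n k) (x k)) -> eventually_bounded (fun k => hn (x k)) ->
  vanishing (fun k => hn (r k)) ->
  (forall k, galerkin_form inner (L (n k)) B (x k) (r k + lam%:C%C *: x k)) ->
  eventually_bounded (fun k => hn (B (x k))).
Proof.
move=> Lx [M [N xM]] r0 gal; apply: eventually_bounded_sqr => [k|].
  exact: hnorm_ge0.
have [N' rN'] := r0 1 ltr01.
exists (M + `|lam| * M ^+ 2), (maxn N N') => k; rewrite geq_max => /andP[/xM xk /rN' rk].
apply: le_trans (galerkin_form_norm (Lx k) (gal k)) _.
have hx_ge0 := hnorm_ge0 (x k).
have xr_le : hn (x k) * hn (r k) <= M.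
  exact: le_trans (ler_piMr hx_ge0 (ltW rk)) xk.
have x2_le : hn (x k) ^+ 2 <= M ^+ 2 by rewrite !expr2 ler_pM.
by rewrite lerD // ler_wpM2l.
Qed.

Lemma galerkin_form_weak_eigen D A DB B L n x x0 r (lam : R) f :
  is_sqrt_op inner D A DB B -> regular_seq inner DB B L -> tends_to_infty n ->
  (forall k, L (n k) (x k)) -> eventually_bounded (fun k => hn (x k)) ->
  weakly_converges inner x x0 -> vanishing (fun k => hn (r k)) ->
  (forall k, galerkin_form inner (L (n k)) B (x k) (r k + lam%:C%C *: x k)) ->
  D f -> inner (A f) x0 = lam%:C%C * inner f x0.
Proof.
move=> [[_ _ symB _] _ DA AB] Breg n_oo Lx x_bnd x_x0 r0 gal Df.
have [DBf DBBf] := (DA f).1 Df.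
have [g [Lg g_f Bg_Bf]] := regular_approx Breg n_oo DBf.
have [_ LD _] := Breg.
have Bx_bnd := galerkin_form_bounded Lx x_bnd r0 gal.
apply: (weak_limit_identity x_x0 x_bnd r0 g_f Bg_Bf Bx_bnd) => k.
have [_ /(_ _ (Lg k))] := gal k; rewrite innerDr innerZr => gal_k.
rewrite AB // symB //; last exact: LD _ _ (Lx k).
rewrite innerBl -gal_k; ring.
Qed.

End InnerProduct.

Theorem lemma3p2 (R : realType) (V : lmodType R[i]) (inner : V -> V -> R[i])
  (D : V -> Prop) (A : V -> V) (L : nat -> V -> Prop)
  (lam : R) (n : nat -> nat) (x : nat -> V) (x0 : V) (r : nat -> V) :
  is_sep_inf_hilbert inner ->
  selfadjoint inner D A ->
  (* n_k -> oo *)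
  (forall M, exists K, forall k, (K <= k)%N -> (M <= n k)%N) ->
  (forall k, L (n k) (x k)) ->
  (forall k, hnorm inner (x k) = 1) ->
  weakly_converges inner x x0 ->
  (* r k = pi_{n_k} (A - lam) x_k := A_{n_k} x_k - lam x_k, in either setting *)
  ((regular_seq inner D A L /\
      forall k, galerkin_A inner (L (n k)) A (x k) (r k + (lam%:C)%C *: x k))
   \/
   (nonneg_op inner D A /\
    exists (DB : V -> Prop) (B : V -> V),
      is_sqrt_op inner D A DB B /\ regular_seq inner DB B L /\
      forall k, galerkin_form inner (L (n k)) B (x k) (r k + (lam%:C)%C *: x k))) ->
  hconverges inner r 0 ->
  D x0 /\ A x0 = (lam%:C)%C *: x0.
Proof.
move=> [Hip _ _ _] Asa n_oo Lx x_unit x_x0 galerkin r0.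
have x_bnd : eventually_bounded (fun k => hnorm inner (x k)).
  by exists 1, 0%N => k _; rewrite x_unit.
have r_van := vanishing_hconverges0 r0.
apply: (selfadjoint_adjoint_eq Hip Asa) => f Df; rewrite (innerZr Hip).
case: galerkin => [[Areg galA] | [_ [DB [B [Bsqrt [Breg galB]]]]]].
- exact: (galerkin_A_weak_eigen Hip Asa Areg n_oo Lx x_bnd x_x0 r_van galA).
- exact: (galerkin_form_weak_eigen Hip Bsqrt Breg n_oo Lx x_bnd x_x0 r_van galB).
Qed.
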